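(* Let $G\le \mathrm{Homeo}_+(\mathbb{R})$ and let $U\subseteq\mathbb{R}$ be a $G$-invariant set. Then the restricted action $G|_U$ (on the ordered set $U$) is non-Conradian if and only if there exists a two-chain $\{J_1,J_2\}$ with $(J_1\cup J_2)\cap U\neq\varnothing$ such that for each $i=1,2$, $J_i$ is a connected component of $\operatorname{supp} g_i$ for some $g_i\in G$.
   Context: For $g\in\mathrm{Homeo}_+(\mathbb{R})$, $\operatorname{supp} g=\mathbb{R}\setminus \mathrm{Fix}(g)$. A pair of open intervals $\{J_1,J_2\}$ in $\mathbb{R}$ is a two-chain if $J_1\cap J_2$ is a proper nonempty subinterval of both $J_1$ and $J_2$. For an ordered set $(\Omega,\le)$ and a group $G$ acting by order-preserving bijections of $\Omega$, two elements $f,g\in G$ are crossed if there exist $u<w<v$ in $\Omega$ such that (1) $g^n(u)<w<f^n(v)$ for all $n\in\mathbb{Z}$, and (2) there is $N\in\mathbb{Z}$ with $g^N(v)<w<f^N(u)$. The action is Conradian if there are no crossed elements. *)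

From HB Require Import structures.
From Stdlib Require Import ClassicalEpsilon.
From mathcomp Require Import all_boot all_order all_algebra.
From mathcomp Require Import all_classical all_reals all_analysis.
Set Implicit Arguments. Unset Strict Implicit. Unset Printing Implicit Defensive.
Import Order.TTheory GRing.Theory Num.Theory.
Import numFieldNormedType.Exports.
Local Open Scope classical_set_scope.
Local Open Scope ring_scope.

Section Defs.
Variable R : realType.

Definition homeo_plus (f : R -> R) : Prop :=
  continuous f /\ bijective f /\ (forall x y, x < y -> f x < f y).

Definition homeo_subgroup (G : set (R -> R)) : Prop :=
  (forall f, G f -> homeo_plus f) /\
  G id /\
  (forall f g, G f -> G g -> G (f \o g)) /\
  (forall f, G f -> exists h, G h /\ cancel f h /\ cancel h f).

Definition G_invariant (G : set (R -> R)) (U : set R) : Prop :=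
  forall g, G g -> g @` U = U.

Definition finv (f : R -> R) : R -> R :=
  epsilon (inhabits (@id R)) (fun h => cancel f h /\ cancel h f).

Definition zpow (f : R -> R) (n : int) : R -> R :=
  match n with
  | Posz k => iter k f
  | Negz k => iter k.+1 (finv f)
  end.

(* f, g crossed for the action on the ordered set U (U assumed invariant,
   so the restricted maps are the restrictions of f, g and their powers). *)
Definition crossed_on (U : set R) (f g : R -> R) : Prop :=
  exists u w v, [/\ U u, U w, U v, u < w & w < v] /\
    (forall n : int, zpow g n u < w /\ w < zpow f n v) /\
    (exists N : int, zpow g N v < w /\ w < zpow f N u).

Definition conradian_on (G : set (R -> R)) (U : set R) : Prop :=
  ~ (exists f g, G f /\ G g /\ crossed_on U f g).

Definition supp (g : R -> R) : set R := [set x | g x != x].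

Definition open_interval (J : set R) : Prop :=
  exists a b : \bar R, J = [set x | (a < x%:E)%E /\ (x%:E < b)%E].

Definition two_chain (J1 J2 : set R) : Prop :=
  [/\ open_interval J1, open_interval J2,
      J1 `&` J2 !=set0, J1 `&` J2 `<` J1 & J1 `&` J2 `<` J2].

Definition component_of_supp (J : set R) (g : R -> R) : Prop :=
  exists x, supp g x /\ J = connected_component (supp g) x.

End Defs.

(* If f and g are crossed at u < w < v, then some power of f carries u beyond w
   and some power of g carries v below w, so f has no fixed point in [u, w] and g
   none in [w, v]: the components J1 of supp f at u and J2 of supp g at v overlap
   at w. They form a two-chain because the orbit of a point of a component of the
   support leaves every compact subinterval of it (a bounded monotone orbit of an
   increasing homeomorphism converges to a fixed point), so J2 cannot contain u
   nor J1 contain v.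
   Conversely, if J1 lies to the left of J2, there are c in J1 fixed by g2 and b
   in J2 fixed by g1 with J1 < b and c < J2. Moving a point of U along g1 or g2
   yields w in U lying in J1 and J2; then u = g1^n w < c and v = g2^m w > b for
   suitable n, m, and powers of g1 (fixing b) and g2 (fixing c) that move u
   beyond w and v below w are crossed at u < w < v. *)

From Pilot Require Import Defs.
From HB Require Import structures.
From Stdlib Require Import ClassicalEpsilon.
From mathcomp Require Import all_boot all_order all_algebra.
From mathcomp Require Import all_classical all_reals all_analysis.
From mathcomp Require Import lra.
Set Implicit Arguments. Unset Strict Implicit. Unset Printing Implicit Defensive.
Import Order.TTheory GRing.Theory Num.Theory.
Import numFieldNormedType.Exports.

Local Open Scope classical_set_scope.
Local Open Scope ring_scope.

Lemma setI_proper_l (T : Type) (A B : set T) :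
  A `&` B `<` A <-> exists2 x, A x & ~ B x.
Proof.
split=> [[_ AB]|[x Ax NBx]]; last by split=> [t []//|/(_ x Ax) []].
apply: contrapT => NAB; apply: AB => t At; split=> //.
by apply: contrapT => NBt; apply: NAB; exists t.
Qed.

Lemma setI_proper_r (T : Type) (A B : set T) :
  A `&` B `<` B <-> exists2 x, B x & ~ A x.
Proof. by rewrite setIC; exact: setI_proper_l. Qed.

Section real_line.
Variable R : realType.
Implicit Types (A C : set R) (h : R -> R).

Lemma is_interval_connected_component A x :
  is_interval (connected_component A x).
Proof. exact/connected_intervalP/component_connected. Qed.

Lemma segment_connected_component A a b : a <= b ->
  (forall t, a <= t <= b -> A t) -> connected_component A a b.
Proof.
move=> ab sA; apply: (connected_component_max (B := `[a, b])).
- by rewrite /= in_itv /= lexx ab.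
- by move=> t /=; rewrite in_itv /=; exact: sA.
- exact: segment_connected.
- by rewrite /= in_itv /= lexx ab.
Qed.

Lemma connected_component_gap_le A x y z : z <= y ->
  connected_component A x y -> ~ connected_component A x z ->
  exists2 c, z <= c <= y & ~ A c.
Proof.
move=> zy Axy NAxz; apply: contrapT => NA; apply: NAxz.
apply: (connected_component_trans Axy); apply: connected_component_sym.
apply: segment_connected_component zy _ => t zty.
by apply: contrapT => NAt; apply: NA; exists t.
Qed.

Lemma connected_component_gap_ge A x y z : y <= z ->
  connected_component A x y -> ~ connected_component A x z ->
  exists2 c, y <= c <= z & ~ A c.
Proof.
move=> yz Axy NAxz; apply: contrapT => NA; apply: NAxz.
apply: (connected_component_trans Axy).
apply: segment_connected_component yz _ => t yzt.
by apply: contrapT => NAt; apply: NA; exists t.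
Qed.

Lemma connected_component_gt A x c s t : ~ A c -> c <= t ->
  connected_component A x t -> connected_component A x s -> c < s.
Proof.
move=> NAc ct Axt Axs; rewrite ltNge; apply/negP => sc; apply/NAc.
apply: (connected_component_sub (x := x)).
by apply: (is_interval_connected_component Axs Axt); rewrite sc ct.
Qed.

Lemma connected_component_lt A x b s t : ~ A b -> t <= b ->
  connected_component A x t -> connected_component A x s -> s < b.
Proof.
move=> NAb tb Axt Axs; rewrite ltNge; apply/negP => bs; apply/NAb.
apply: (connected_component_sub (x := x)).
by apply: (is_interval_connected_component Axt Axs); rewrite tb bs.
Qed.

Lemma is_interval_chain_between (I1 I2 : set R) q y1 y2 :
  is_interval I1 -> is_interval I2 -> I1 q -> I2 q ->
  I1 y1 -> ~ I2 y1 -> I2 y2 -> ~ I1 y2 -> (y1 < q < y2) || (y2 < q < y1).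
Proof.
move=> iI1 iI2 I1q I2q I1y1 NI2y1 I2y2 NI1y2.
have [y1q|qy1|y1E] := ltgtP y1 q; last by rewrite y1E in NI2y1.
- rewrite andbF orbF ltNge; apply/negP => y2q; have [y12|y21] := leP y1 y2.
  + by apply/NI1y2/(iI1 y1 q); rewrite ?y12.
  + by apply/NI2y1/(iI2 y2 q); rewrite ?(ltW y21) ?(ltW y1q).
- rewrite /= andbT ltNge; apply/negP => qy2; have [y12|y21] := leP y1 y2.
  + by apply/NI2y1/(iI2 q y2); rewrite ?y12 ?(ltW qy1).
  + by apply/NI1y2/(iI1 q y1); rewrite ?qy2 ?(ltW y21).
Qed.

Lemma open_connected_component A x : open A -> open (connected_component A x).
Proof.
move=> oA; rewrite openE => t Axt.
have /oA : A t by exact: connected_component_sub Axt.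
rewrite /interior => /nbhs_ballP [e e0 sA]; apply/nbhs_ballP; exists e => //.
rewrite (same_connected_component Axt); apply: connected_component_max => //.
- exact: ballxx.
- by apply/connected_intervalP; rewrite ball_itv; exact: interval_is_interval.
Qed.

Lemma open_is_interval_open_interval C : open C -> is_interval C ->
  open_interval C.
Proof.
move=> oC iC; exists (ereal_inf (EFin @` C)), (ereal_sup (EFin @` C)).
apply/seteqP; split=> t /=; last first.
  move=> [] /ereal_inf_lt [_ [s Cs <-]] st /ereal_sup_gt [_ [s' Cs' <-]] ts.
  by rewrite lte_fin in st ts; apply: (iC s s'); rewrite ?ltW.
move=> Ct.
have /oC /nbhs_ballP [e /= e0 sC] := Ct; rewrite ball_itv in sC.
have Cl : C (t - e / 2) by apply: sC; rewrite /= in_itv /=; apply/andP; split; lra.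
have Cr : C (t + e / 2) by apply: sC; rewrite /= in_itv /=; apply/andP; split; lra.
split.
- apply: (@le_lt_trans _ _ (t - e / 2)%:E); last by rewrite lte_fin; lra.
  by apply: ereal_inf_lbound; exists (t - e / 2).
- apply: (@lt_le_trans _ _ (t + e / 2)%:E); first by rewrite lte_fin; lra.
  by apply: ereal_sup_ubound; exists (t + e / 2).
Qed.

Lemma open_supp h : continuous h -> open (supp h).
Proof.
move=> hc; have -> : supp h = (h \- id) @^-1` [set y | y != 0].
  by apply/seteqP; split=> t; rewrite /supp /= subr_eq0.
apply: open_comp; last exact: open_neq.
by move=> t _; apply: continuousB; [exact: hc | exact: cvg_id].
Qed.

Lemma open_interval_component_supp h x : continuous h ->
  open_interval (connected_component (supp h) x).
Proof.
move=> hc; apply: open_is_interval_open_interval.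
  exact/open_connected_component/open_supp.
exact: is_interval_connected_component.
Qed.

End real_line.

Lemma bounded_iter_fixpoint_ge (R : realType) (k : R -> R) y z :
  continuous k -> {homo k : a b / a <= b} -> y <= k y ->
  (forall m, iter m k y <= z) -> exists L, [/\ y <= L, L <= z & k L = L].
Proof.
move=> k_cont k_nd yk hz; pose s m := iter m k y.
have nd : nondecreasing_seq s.
  by apply/nondecreasing_seqP; elim=> //= m IH; apply: k_nd.
have ub : has_ubound (range s) by exists z => _ [m _ <-]; apply: hz.
have cv := nondecreasing_cvgn nd ub; set L := sup (range s) in cv.
have ks_kL : (k \o s) @ \oo --> k L.
  by apply: continuous_cvg; [exact: k_cont | exact: cv].
have ks_L : (k \o s) @ \oo --> L by move: cv; rewrite -(cvg_shiftS s).
exists L; split.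
- by apply: (ub_le_sup ub); exists 0%N.
- by apply: ge_sup; [exists y, 0%N | move=> _ [m _ <-]; apply: hz].
- exact: (cvg_unique (@Rhausdorff R) ks_kL ks_L).
Qed.

Lemma bounded_iter_fixpoint_le (R : realType) (k : R -> R) y z :
  continuous k -> {homo k : a b / a <= b} -> k y <= y ->
  (forall m, z <= iter m k y) -> exists L, [/\ z <= L, L <= y & k L = L].
Proof.
move=> k_cont k_nd ky hz; pose k' x := - k (- x).
have k'_cont : continuous k'.
  move=> x; apply/continuousN/continuous_comp; first exact: continuousN.
  exact: k_cont.
have k'_nd : {homo k' : a b / a <= b} by move=> a b ab; rewrite lerN2 k_nd // lerN2.
have iter_k' m : iter m k' (- y) = - iter m k y.
  by elim: m => //= m ->; rewrite /k' opprK.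
have [|m|L [yL Lz k'L]] :=
  bounded_iter_fixpoint_ge k'_cont k'_nd (y := - y) (z := - z).
- by rewrite /k' opprK lerN2.
- by rewrite iter_k' lerN2.
by exists (- L); rewrite lerNr lerNl yL Lz -{2}k'L /k' opprK.
Qed.

Section homeo_group.
Variable R : realType.
Variable G : set (R -> R).
Hypothesis HG : homeo_subgroup G.
Implicit Types f h : R -> R.

Lemma G_lt f x y : G f -> x < y -> f x < f y.
Proof. by case: HG => Ghomeo _ /Ghomeo [_ [_]]; apply. Qed.

Lemma G_mono f : G f -> {mono f : x y / x <= y}.
Proof. by move=> Gf; apply: le_mono => x y; apply: G_lt. Qed.

Lemma G_homo f : G f -> {homo f : x y / x <= y}.
Proof. by move=> Gf x y; rewrite (G_mono Gf). Qed.

Lemma G_continuous f : G f -> continuous f.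
Proof. by case: HG => Ghomeo _ /Ghomeo []. Qed.

Lemma finv_cancel f : G f -> cancel f (Defs.finv f) /\ cancel (Defs.finv f) f.
Proof.
case: HG => _ [_ [_ Ginv]] /Ginv [g [_ fg]].
apply: (epsilon_spec (inhabits (@id R)) (fun h => cancel f h /\ cancel h f)).
by exists g.
Qed.

Lemma G_finv f : G f -> G (Defs.finv f).
Proof.
case: HG => _ [_ [_ Ginv]] Gf; have [g [Gg [fK gK]]] := Ginv f Gf.
have [finvK _] := finv_cancel Gf.
suff -> : Defs.finv f = g by [].
by apply: funext => x; rewrite -{1}(gK x) finvK.
Qed.

Lemma finv_ge f x : G f -> (x <= Defs.finv f x) = (f x <= x).
Proof. by move=> Gf; have [_ finvK] := finv_cancel Gf; rewrite -(G_mono Gf) finvK. Qed.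

Lemma finv_le f x : G f -> (Defs.finv f x <= x) = (x <= f x).
Proof. by move=> Gf; have [_ finvK] := finv_cancel Gf; rewrite -(G_mono Gf) finvK. Qed.

Lemma finv_fix f x : G f -> Defs.finv f x = x -> f x = x.
Proof. by move=> Gf fx; have [_ finvK] := finv_cancel Gf; rewrite -{1}fx finvK. Qed.

Lemma G_iter f k : G f -> G (iter k f).
Proof. by case: HG => _ [Gid [Gcomp _]] Gf; elim: k => //= k; apply: Gcomp. Qed.

Lemma G_zpow f n : G f -> G (zpow f n).
Proof. by move=> Gf; case: n => k; [exact: G_iter | exact/G_iter/G_finv]. Qed.

Lemma zpow_fix f n x : G f -> f x = x -> zpow f n x = x.
Proof.
have iter_fix g k : g x = x -> iter k g x = x by move=> gx; elim: k => //= k ->.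
move=> Gf fx; case: n => k; first exact: iter_fix.
by apply: iter_fix; have [fK _] := finv_cancel Gf; rewrite -{1}fx fK.
Qed.

Lemma zpow_le_fix f n c u : G f -> f c = c -> (zpow f n u <= c) = (u <= c).
Proof. by move=> Gf fc; rewrite -{1}(zpow_fix n Gf fc) (G_mono (G_zpow n Gf)). Qed.

Lemma zpow_ge_fix f n c u : G f -> f c = c -> (c <= zpow f n u) = (c <= u).
Proof. by move=> Gf fc; rewrite -{1}(zpow_fix n Gf fc) (G_mono (G_zpow n Gf)). Qed.

Lemma zpow_lt_fix f n c u : G f -> f c = c -> (zpow f n u < c) = (u < c).
Proof. by move=> Gf fc; rewrite !ltNge zpow_ge_fix. Qed.

Lemma zpow_gt_fix f n c u : G f -> f c = c -> (c < zpow f n u) = (c < u).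
Proof. by move=> Gf fc; rewrite !ltNge zpow_le_fix. Qed.

Lemma component_supp_zpow h x t n : G h ->
  connected_component (supp h) x t -> connected_component (supp h) x (zpow h n t).
Proof.
move=> Gh Jt; have ht : h t != t := connected_component_sub Jt.
apply: (connected_component_trans Jt).
have [tz|zt] := leP t (zpow h n t).
  apply: segment_connected_component tz _ => s /andP[ts sz]; apply/eqP => hs.
  move: ts; rewrite le_eqVlt => /predU1P[tsE|ts]; first by rewrite tsE hs eqxx in ht.
  by move: sz; rewrite leNgt zpow_lt_fix ?ts.
apply/connected_component_sym/segment_connected_component; first exact: ltW.
move=> s /andP[zs st]; apply/eqP => hs.
move: st; rewrite le_eqVlt => /predU1P[stE|st]; first by rewrite -stE hs eqxx in ht.
by move: zs; rewrite leNgt zpow_gt_fix ?st.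
Qed.

Lemma component_supp_of_zpow_gt h u w n : G h -> u <= w -> w < zpow h n u ->
  connected_component (supp h) u w.
Proof.
move=> Gh uw wh; apply: segment_connected_component uw _ => t /andP[ut tw].
by apply/eqP => ht; move: wh; rewrite ltNge (le_trans _ tw) // zpow_le_fix.
Qed.

Lemma component_supp_of_zpow_lt h v w n : G h -> w <= v -> zpow h n v < w ->
  connected_component (supp h) v w.
Proof.
move=> Gh wv hw; apply/connected_component_sym/segment_connected_component => //.
move=> t /andP[wt tv].
by apply/eqP => ht; move: hw; rewrite ltNge (le_trans wt) // zpow_ge_fix.
Qed.

Lemma component_supp_escape_r h x a b : G h -> connected_component (supp h) x a ->
  connected_component (supp h) x b -> a <= b -> exists n, b < zpow h n a.
Proof.
move=> Gh Ja Jb ab; apply: contrapT => Nescape.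
have bound n : zpow h n a <= b.
  by rewrite leNgt; apply/negP => ?; apply: Nescape; exists n.
suff [L aLb hL] : exists2 L, a <= L <= b & h L = L.
  have : supp h L := connected_component_sub (is_interval_connected_component Ja Jb aLb).
  by rewrite /supp /= hL eqxx.
have ha : h a != a := connected_component_sub Ja.
case: (ltgtP (h a) a) => [ha_lt|ha_gt|haE]; last by rewrite haE eqxx in ha.
- have Gh' := G_finv Gh.
  have [|[|m]|L [aL Lb h'L]] :=
    bounded_iter_fixpoint_ge (G_continuous Gh') (G_homo Gh') (y := a) (z := b).
  + by rewrite finv_ge // ltW.
  + exact: ab.
  + exact: (bound (Negz m)).
  + by exists L; rewrite ?aL ?(finv_fix Gh h'L).
- have [|m|L [aL Lb hL]] :=
    bounded_iter_fixpoint_ge (G_continuous Gh) (G_homo Gh) (y := a) (z := b).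
  + exact: ltW.
  + exact: (bound (Posz m)).
  + by exists L; rewrite ?aL.
Qed.

Lemma component_supp_escape_l h x a b : G h -> connected_component (supp h) x a ->
  connected_component (supp h) x b -> a <= b -> exists n, zpow h n b < a.
Proof.
move=> Gh Ja Jb ab; apply: contrapT => Nescape.
have bound n : a <= zpow h n b.
  by rewrite leNgt; apply/negP => ?; apply: Nescape; exists n.
suff [L aLb hL] : exists2 L, a <= L <= b & h L = L.
  have : supp h L := connected_component_sub (is_interval_connected_component Ja Jb aLb).
  by rewrite /supp /= hL eqxx.
have hb : h b != b := connected_component_sub Jb.
case: (ltgtP (h b) b) => [hb_lt|hb_gt|hbE]; last by rewrite hbE eqxx in hb.
- have [|m|L [aL Lb hL]] :=
    bounded_iter_fixpoint_le (G_continuous Gh) (G_homo Gh) (y := b) (z := a).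
  + exact: ltW.
  + exact: (bound (Posz m)).
  + by exists L; rewrite ?aL.
- have Gh' := G_finv Gh.
  have [|[|m]|L [aL Lb h'L]] :=
    bounded_iter_fixpoint_le (G_continuous Gh') (G_homo Gh') (y := b) (z := a).
  + by rewrite finv_le // ltW.
  + exact: ab.
  + exact: (bound (Negz m)).
  + by exists L; rewrite ?aL ?(finv_fix Gh h'L).
Qed.

Variable U : set R.
Hypothesis HU : G_invariant G U.

Lemma invariant_mem f x : G f -> U x -> U (f x).
Proof. by move=> Gf Ux; rewrite -(HU Gf); exists x. Qed.

Lemma two_chain_of_crossed f g : G f -> G g -> crossed_on U f g ->
  exists (J1 J2 : set R) (g1 g2 : R -> R),
    [/\ two_chain J1 J2, (J1 `|` J2) `&` U !=set0,
        G g1 /\ component_of_supp J1 g1 & G g2 /\ component_of_supp J2 g2].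
Proof.
move=> Gf Gg [u [w [v [[Uu Uw Uv uw wv] [orbit_sides [N [gNv_w w_fNu]]]]]]].
set J1 := connected_component (supp f) u; set J2 := connected_component (supp g) v.
have J1w : J1 w := component_supp_of_zpow_gt Gf (ltW uw) w_fNu.
have J2w : J2 w := component_supp_of_zpow_lt Gg (ltW wv) gNv_w.
have J1u : J1 u := connected_component_trans J1w (connected_component_sym J1w).
have J2v : J2 v := connected_component_trans J2w (connected_component_sym J2w).
have NJ2u : ~ J2 u.
  move=> J2u; have [n] := component_supp_escape_r Gg J2u J2w (ltW uw).
  by move/(lt_trans (orbit_sides n).1); rewrite ltxx.
have NJ1v : ~ J1 v.
  move=> J1v; have [n] := component_supp_escape_l Gf J1w J1v (ltW wv).
  by move/(lt_trans (orbit_sides n).2); rewrite ltxx.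
exists J1, J2, f, g; split.
- split; [exact/open_interval_component_supp/G_continuous..|by exists w| |].
  + by apply/setI_proper_l; exists u.
  + by apply/setI_proper_r; exists v.
- by exists u; split; [left|].
- by split=> //; exists u; split=> //; exact: connected_component_sub J1u.
- by split=> //; exists v; split=> //; exact: connected_component_sub J2v.
Qed.

Section two_components.
Variables (g1 g2 : R -> R) (x1 x2 : R).
Hypotheses (Gg1 : G g1) (Gg2 : G g2).
Local Notation J1 := (connected_component (supp g1) x1).
Local Notation J2 := (connected_component (supp g2) x2).

Lemma crossed_of_overlap c w b : J1 c -> J1 w -> J2 w -> J2 b ->
  g2 c = c -> g1 b = b -> c < w -> w < b -> U w ->
  exists f g, G f /\ G g /\ crossed_on U f g.
Proof.
move=> J1c J1w J2w J2b g2c g1b cw wb Uw.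
have [n u_c] := component_supp_escape_l Gg1 J1c J1w (ltW cw).
have [m b_v] := component_supp_escape_r Gg2 J2w J2b (ltW wb).
set u := zpow g1 n w in u_c; set v := zpow g2 m w in b_v.
have [uw wv] : u < w /\ w < v by split; [exact: lt_trans cw | exact: lt_trans b_v].
have J1u : J1 u := component_supp_zpow n Gg1 J1w.
have J2v : J2 v := component_supp_zpow m Gg2 J2w.
have [n' w_fu] := component_supp_escape_r Gg1 J1u J1w (ltW uw).
have [m' gv_w] := component_supp_escape_l Gg2 J2w J2v (ltW wv).
exists (zpow g1 n'), (zpow g2 m'); split; [exact: G_zpow|split; [exact: G_zpow|]].
exists u, w, v; split; last split; last by exists 1.
- split=> //; first exact: invariant_mem (G_zpow n Gg1) Uw.
  exact: invariant_mem (G_zpow m Gg2) Uw.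
- move=> k; split.
  + apply: (lt_trans _ cw); rewrite zpow_lt_fix //; [exact: G_zpow | exact: zpow_fix].
  + apply: (lt_trans wb); rewrite zpow_gt_fix //; [exact: G_zpow | exact: zpow_fix].
Qed.

Lemma overlap_meets_invariant c q b p : J1 c -> J1 q -> J2 q -> J2 b ->
  c <= q -> q <= b -> g2 c = c -> g1 b = b -> U p -> J1 p \/ J2 p ->
  exists w, [/\ U w, J1 w & J2 w].
Proof.
move=> J1c J1q J2q J2b cq qb g2c g1b Up Jp.
have J1_lt_b t : J1 t -> t < b.
  by apply: connected_component_lt qb J1q; rewrite /supp /= g1b eqxx.
have c_lt_J2 t : J2 t -> c < t.
  by apply: connected_component_gt cq J2q; rewrite /supp /= g2c eqxx.
have J1_cq t : c <= t <= q -> J1 t by apply: (is_interval_connected_component J1c J1q).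
have J2_qb t : q <= t <= b -> J2 t by apply: (is_interval_connected_component J2q J2b).
case: Jp => [J1p|J2p].
- have [J2p|NJ2p] := pselect (J2 p); first by exists p.
  have pq : p < q.
    by rewrite ltNge; apply/negP => qp; apply/NJ2p/J2_qb; rewrite qp ltW ?J1_lt_b.
  have [n q_lt] := component_supp_escape_r Gg1 J1p J1q (ltW pq).
  exists (zpow g1 n p); split; first exact: invariant_mem (G_zpow n Gg1) Up.
  + exact: component_supp_zpow.
  + by apply: J2_qb; rewrite (ltW q_lt) ltW // zpow_lt_fix // J1_lt_b.
- have [J1p|NJ1p] := pselect (J1 p); first by exists p.
  have qp : q < p.
    by rewrite ltNge; apply/negP => pq; apply/NJ1p/J1_cq; rewrite pq ltW ?c_lt_J2.
  have [n lt_q] := component_supp_escape_l Gg2 J2q J2p (ltW qp).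
  exists (zpow g2 n p); split; first exact: invariant_mem (G_zpow n Gg2) Up.
  + by apply: J1_cq; rewrite (ltW lt_q) andbT ltW // zpow_gt_fix // c_lt_J2.
  + exact: component_supp_zpow.
Qed.

Lemma crossed_of_two_chain q y1 y2 p : J1 q -> J2 q ->
  J1 y1 -> ~ J2 y1 -> J2 y2 -> ~ J1 y2 -> y1 < q -> q < y2 ->
  U p -> J1 p \/ J2 p -> exists f g, G f /\ G g /\ crossed_on U f g.
Proof.
move=> J1q J2q J1y1 NJ2y1 J2y2 NJ1y2 y1q qy2 Up Jp.
have [c /andP[y1c cq] Nc] := connected_component_gap_le (ltW y1q) J2q NJ2y1.
have [b /andP[qb by2] Nb] := connected_component_gap_ge (ltW qy2) J1q NJ1y2.
have g2c : g2 c = c by apply/eqP/negPn/negP.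
have g1b : g1 b = b by apply/eqP/negPn/negP.
have J1c : J1 c by apply: (is_interval_connected_component J1y1 J1q); rewrite y1c cq.
have J2b : J2 b by apply: (is_interval_connected_component J2q J2y2); rewrite qb by2.
have [w [Uw J1w J2w]] := overlap_meets_invariant J1c J1q J2q J2b cq qb g2c g1b Up Jp.
apply: (crossed_of_overlap J1c J1w J2w J2b g2c g1b _ _ Uw).
- exact: connected_component_gt Nc cq J2q J2w.
- exact: connected_component_lt Nb qb J1q J1w.
Qed.

End two_components.

End homeo_group.

Theorem lemma2p5 (R : realType) (G : set (R -> R)) (U : set R) :
  homeo_subgroup G -> G_invariant G U ->
  (~ conradian_on G U <->
   exists (J1 J2 : set R) (g1 g2 : R -> R),
     [/\ two_chain J1 J2, (J1 `|` J2) `&` U !=set0,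
         G g1 /\ component_of_supp J1 g1 & G g2 /\ component_of_supp J2 g2]).
Proof.
move=> HG HU; split.
  by move=> /contrapT [f [g [Gf [Gg fg]]]]; exact (two_chain_of_crossed HG Gf Gg fg).
move=> [J1 [J2 [g1 [g2 [[_ _ [q [J1q J2q]]]]]]]].
move=> /setI_proper_l [y1 J1y1 NJ2y1] /setI_proper_r [y2 J2y2 NJ1y2].
move=> [p [Jp Up]] [Gg1 [x1 [_ E1]]] [Gg2 [x2 [_ E2]]]; subst J1 J2; apply.
have := is_interval_chain_between (@is_interval_connected_component _ (supp g1) x1)
  (@is_interval_connected_component _ (supp g2) x2) J1q J2q J1y1 NJ2y1 J2y2 NJ1y2.
case/orP=> /andP[y1q qy2].
  exact (crossed_of_two_chain HG HU Gg1 Gg2 J1q J2q J1y1 NJ2y1 J2y2 NJ1y2 y1q qy2 Up Jp).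
rewrite setUC in Jp.
exact (crossed_of_two_chain HG HU Gg2 Gg1 J2q J1q J2y2 NJ1y2 J1y1 NJ2y1 y1q qy2 Up Jp).
Qed.
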